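(* Let $M$ be a minimal dominating set of a finite tree $T$ and let $v\in a_1(M)$. Let $N=N[v]\cap N_1(M)$ and $M_0=(M\setminus\{v\})\cup N$. Then Algorithm 1 (described below), applied to $T$ rooted at $v$ and the set $M_0$, outputs a minimal dominating set $M_i$ with $|M_i|\ge|M_0|\ge|M|$. Algorithm 1: set $i=0$; while $M_i$ is not a minimal dominating set: choose a supported vertex $u_i\in M_i\setminus a(M_i)$ of least depth; let $A_{i+1}$ be the set of vertices of $a_1(M_i)$ adjacent to $u_i$; let $N_{i+1}$ be the set of vertices of $N_1(M_i)$ adjacent to a vertex of $A_{i+1}$; set $M_{i+1}=(M_i\setminus A_{i+1})\cup N_{i+1}$ and increase $i$ by one. When the loop ends, return $M_i$.
   Context: A dominating set of a graph $G=(V,E)$ is a set $S\subseteq V$ such that every vertex is in $S$ or adjacent to a vertex of $S$; it is minimal if no proper subset is dominating. $N[u]=N(u)\cup\{u\}$ is the closed neighbourhood. For a dominating set $S$: $a(S)=\{u\in S: S\setminus\{u\}\text{ is not dominating}\}$ (critical vertices); vertices of $S\setminus a(S)$ are called supported; $N_1(S)=\{u\in V\setminus S: |N[u]\cap S|=1\}$; $a_1(S)=\{u\in a(S): N[u]\cap N_1(S)\ne\emptyset\}$. In a tree rooted at $v$, depth of a vertex is its distance to $v$. *)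

From mathcomp Require Import all_boot.
Set Implicit Arguments. Unset Strict Implicit. Unset Printing Implicit Defensive.

Section Graph.
Variables (T : finType) (e : rel T).

Definition simple_graph : Prop := symmetric e /\ irreflexive e.

Definition connected_graph : Prop := forall x y : T, connect e x y.

Definition acyclic_graph : Prop :=
  forall (x : T) (p : seq T),
    uniq (x :: p) -> path e x p -> 2 <= size p -> ~~ e (last x p) x.

Definition is_tree : Prop := simple_graph /\ connected_graph /\ acyclic_graph.

Definition cnbhd (u : T) : {set T} := u |: [set w | e u w].

Definition dominating (S : {set T}) : bool :=
  [forall x : T, cnbhd x :&: S != set0].

Definition minimal_dominating (S : {set T}) : bool :=
  dominating S && [forall S' : {set T}, (S' \proper S) ==> ~~ dominating S'].

Definition crit (S : {set T}) : {set T} := [set u in S | ~~ dominating (S :\ u)].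

Definition N1 (S : {set T}) : {set T} :=
  [set u in ~: S | #|cnbhd u :&: S| == 1].

Definition a1 (S : {set T}) : {set T} :=
  [set u in crit S | cnbhd u :&: N1 S != set0].

Definition walk_len (x y : T) (n : nat) : Prop :=
  exists p : seq T, [/\ path e x p, last x p = y & size p = n].

(* depth(u) <= depth(w) for the tree rooted at r (depth = distance to r) *)
Definition depth_le (r u w : T) : Prop :=
  forall k, walk_len r w k -> exists2 j, j <= k & walk_len r u j.

Definition alg_step (r : T) (M M' : {set T}) : Prop :=
  ~~ minimal_dominating M /\
  exists u : T,
    [/\ u \in M :\: crit M,
        (forall w, w \in M :\: crit M -> depth_le r u w) &
        let A := [set x in a1 M | e u x] in
        let N' := [set y in N1 M | [exists x in A, e x y]] in
        M' = (M :\: A) :|: N'].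

Definition alg_reach (r : T) (M0 M' : {set T}) : Prop :=
  exists (f : nat -> {set T}) (k : nat),
    [/\ f 0 = M0, f k = M' & forall i, i < k -> alg_step r (f i) (f i.+1)].

Definition alg_diverges (r : T) (M0 : {set T}) : Prop :=
  exists f : nat -> {set T}, f 0 = M0 /\ forall i, alg_step r (f i) (f i.+1).

End Graph.

(* The invariant [no_supported_child M] says that no supported
   vertex of M has its parent in M; minimal dominating sets satisfy it trivially.
   Under it, the critical neighbours A of a supported vertex u are children of u,
   hence all on one level k, and their neighbours N' in N_1(M) lie on level k + 1.
   Exchanging A for N' keeps the set dominating and preserves the invariant, and
   since a vertex of N_1(M) has a single neighbour in M, |A| <= |N'|: the size does
   not drop while the sum of the depths rises by at least |A| >= 1.  The depth sum
   is bounded, so every run terminates.  M_0 is the exchange of A = {v} in M. *)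

From mathcomp Require Import all_boot zify.
Set Implicit Arguments. Unset Strict Implicit. Unset Printing Implicit Defensive.

Section Domination.
Variables (T : finType) (e : rel T).
Hypotheses (e_sym : symmetric e) (e_irr : irreflexive e).

Lemma cnbhd_refl x : x \in cnbhd e x.
Proof. by rewrite !inE eqxx. Qed.

Lemma cnbhd_adj x y : e x y -> y \in cnbhd e x.
Proof. by rewrite !inE => ->; rewrite orbT. Qed.

Lemma cnbhd_sym x y : (x \in cnbhd e y) = (y \in cnbhd e x).
Proof. by rewrite !inE eq_sym e_sym. Qed.

Lemma cnbhd_neq x y : y \in cnbhd e x -> y != x -> e x y.
Proof. by rewrite !inE => /orP [->|]. Qed.

Lemma cnbhd_out (S : {set T}) x y : y \in cnbhd e x -> y \in S -> x \notin S -> e x y.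
Proof. by move=> xy yS xS; apply: cnbhd_neq xy _; apply: contraNneq xS => <-. Qed.

Lemma dominatingP (S : {set T}) :
  reflect (forall x, exists2 y, y \in cnbhd e x & y \in S) (dominating e S).
Proof.
apply: (iffP forallP) => [dS x | dS x].
  by have /set0Pn [y] := dS x; rewrite inE => /andP [xy yS]; exists y.
by have [y xy yS] := dS x; apply/set0Pn; exists y; rewrite inE xy.
Qed.

Lemma N1_notin (S : {set T}) y : y \in N1 e S -> y \notin S.
Proof. by rewrite !inE => /andP []. Qed.

Lemma N1_uniq (S : {set T}) y x1 x2 : y \in N1 e S ->
  x1 \in cnbhd e y -> x1 \in S -> x2 \in cnbhd e y -> x2 \in S -> x1 = x2.
Proof.
rewrite inE => /andP [_ /cards1P [w Sy]] yx1 x1S yx2 x2S.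
have : x1 \in cnbhd e y :&: S by rewrite inE yx1.
have : x2 \in cnbhd e y :&: S by rewrite inE yx2.
by rewrite Sy !inE => /eqP -> /eqP ->.
Qed.

Lemma N1_intro (S : {set T}) y x : y \notin S -> x \in cnbhd e y -> x \in S ->
  (forall w, w \in cnbhd e y -> w \in S -> w = x) -> y \in N1 e S.
Proof.
move=> yS yx xS Sx; rewrite !inE yS /=; apply/cards1P; exists x.
apply/setP => w; rewrite in_setI in_set1.
by apply/andP/eqP => [[yw wS] | ->]; [exact: Sx | split].
Qed.

Definition dominator (S : {set T}) (y : T) : T := odflt y [pick x in cnbhd e y :&: S].

Lemma dominatorE (S : {set T}) y x :
  y \in N1 e S -> x \in cnbhd e y -> x \in S -> dominator S y = x.
Proof.
rewrite /dominator => yN yx xS; case: pickP => [x' | /(_ x)]; last by rewrite inE yx xS.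
by rewrite inE => /andP [yx' x'S]; apply: N1_uniq yN yx' x'S yx xS.
Qed.

Lemma crit_subset (S : {set T}) : crit e S \subset S.
Proof. by apply/subsetP => x; rewrite inE => /andP []. Qed.

Lemma a1_subset (S : {set T}) : a1 e S \subset crit e S.
Proof. by apply/subsetP => x; rewrite inE => /andP []. Qed.

Lemma a1_mem (S : {set T}) x : x \in a1 e S -> x \in S.
Proof. by move=> /(subsetP (a1_subset S)) /(subsetP (crit_subset S)). Qed.

Lemma a1_N1 (S : {set T}) x : x \in a1 e S -> exists2 y, y \in cnbhd e x & y \in N1 e S.
Proof.
rewrite /a1 inE => /andP [_ /set0Pn [y]].
by rewrite in_setI => /andP [xy yN]; exists y.
Qed.

Lemma supported_dominating (S : {set T}) z : z \in S :\: crit e S -> dominating e (S :\ z).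
Proof. by rewrite !inE => /andP [/nandP [/negP // | /negbNE]]. Qed.

Lemma minimal_crit (S : {set T}) z : minimal_dominating e S -> z \in S -> z \in crit e S.
Proof.
case/andP => _ /forallP /(_ (S :\ z)) minS zS; rewrite inE zS.
by move: minS; rewrite properD1.
Qed.

Lemma crit_private (S : {set T}) z : dominating e S -> z \in crit e S ->
  exists2 w, z \in cnbhd e w & forall t, t \in cnbhd e w -> t \in S -> t = z.
Proof.
move=> /dominatingP dS; rewrite inE => /andP [zS].
rewrite negb_forall => /existsP [w]; rewrite negbK => /eqP wS.
have Sw t : t \in cnbhd e w -> t \in S -> t = z.
  move=> wt tS; apply/eqP; apply: contraT => tz.
  have : t \in cnbhd e w :&: (S :\ z) by rewrite in_setI in_setD1 wt tz tS.
  by rewrite wS inE.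
by have [t wt tS] := dS w; exists w => //; rewrite -(Sw t).
Qed.

Lemma crit_a1 (S : {set T}) c u :
  dominating e S -> c \in crit e S -> u \in S -> e c u -> c \in a1 e S.
Proof.
move=> dS cc uS ecu; rewrite inE cc /=.
have [w cw Sw] := crit_private dS cc.
have wc : w != c.
  apply/eqP => wc; subst w.
  by have uc := Sw u (cnbhd_adj ecu) uS; move: ecu; rewrite uc e_irr.
have cS := subsetP (crit_subset S) c cc.
have wS : w \notin S by apply: contra wc => wS; rewrite (Sw w (cnbhd_refl w) wS).
apply/set0Pn; exists w; rewrite inE cnbhd_sym cw /=.
by apply: N1_intro cw cS Sw.
Qed.

Definition private_nbrs (S A : {set T}) : {set T} :=
  [set y in N1 e S | [exists x in A, e x y]].

Definition exchange (S A : {set T}) : {set T} := (S :\: A) :|: private_nbrs S A.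

Lemma private_nbrsP (S A : {set T}) y :
  reflect (y \in N1 e S /\ exists2 x, x \in A & e x y) (y \in private_nbrs S A).
Proof.
rewrite /private_nbrs inE; apply: (iffP andP).
  by case=> yN /existsP [x /andP [xA exy]]; split=> //; exists x.
case=> yN [x xA exy].
by split=> //; apply/existsP; exists x; rewrite xA.
Qed.

End Domination.

Section RootedTree.
Variables (T : finType) (e : rel T) (v : T).
Hypotheses (e_sym : symmetric e) (e_irr : irreflexive e)
  (conn : connected_graph e) (acyc : acyclic_graph e).

Definition avoid (z : T) : rel T := [rel x y | [&& e x y, x != z & y != z]].

Lemma avoid_sym z : symmetric (avoid z).
Proof. by move=> x y; rewrite /avoid /= e_sym [(x != z) && _]andbC. Qed.

Lemma avoid_path z x p :
  path e x p -> all (predC1 z) (x :: p) -> path (avoid z) x p.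
Proof.
elim: p x => //= y p IH x /andP [exy pp] /and3P [xz yz zp].
by rewrite /avoid /= exy xz yz IH //= yz.
Qed.

Lemma avoid_path_notin z x p : path (avoid z) x p -> p != [::] -> z \notin x :: p.
Proof.
elim: p x => //= y p IH x /andP [/and3P [_ xz yz] pp] _.
rewrite in_cons eq_sym (negbTE xz) /=.
by case: p IH pp => [|y' p'] IH pp; [rewrite inE eq_sym | exact: IH].
Qed.

Lemma acyclic_cut z a b : e z a -> e z b -> connect (avoid z) a b -> a = b.
Proof.
move=> eza ezb /connectP [p /shortenP [q pq uq _] eb].
case: q pq uq eb => [//|y q] pq uq eb; subst b.
have zq : z \notin a :: y :: q by exact: avoid_path_notin.
have eq : path e a (y :: q) by apply: sub_path pq => s t /and3P [].
have uzq : uniq (z :: a :: y :: q) by rewrite cons_uniq zq uq.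
have pzq : path e z (a :: y :: q) by apply/andP.
by have := acyc uzq pzq isT; rewrite /= e_sym ezb.
Qed.

Definition has_walk (z : T) (n : nat) : bool :=
  [exists p : n.-tuple T, path e v p && (last v p == z)].

Lemma has_walkP z n :
  reflect (exists p, [/\ path e v p, last v p = z & size p = n]) (has_walk z n).
Proof.
apply: (iffP existsP) => [[p /andP [pp /eqP lp]] | [p [pp lp /eqP sp]]].
  by exists p; rewrite size_tuple.
by exists (Tuple sp); rewrite /= pp lp eqxx.
Qed.

Lemma has_walk_exists z : exists n, has_walk z n.
Proof. by have /connectP [p pp ->] := conn v z; exists (size p); apply/has_walkP; exists p. Qed.

Definition depth (z : T) : nat := ex_minn (has_walk_exists z).

Lemma depth_walk z : exists p, [/\ path e v p, last v p = z & size p = depth z].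
Proof. by rewrite /depth; case: ex_minnP => n /has_walkP. Qed.

Lemma depth_min p : path e v p -> depth (last v p) <= size p.
Proof.
rewrite /depth => pp; case: ex_minnP => n _; apply.
by apply/has_walkP; exists p.
Qed.

Lemma depth_on_path p y : path e v p -> y \in v :: p -> depth y <= size p.
Proof.
move=> pp yp; case/splitPl: yp pp => p1 p2 <-; rewrite cat_path => /andP [pp1 _].
by rewrite (leq_trans (depth_min pp1)) // size_cat leq_addr.
Qed.

Lemma depth_root : depth v = 0.
Proof. by apply/eqP; rewrite -leqn0 (depth_min (p := [::])). Qed.

Lemma depth_edge a b : e a b -> depth b <= (depth a).+1.
Proof.
move=> eab; have [p [pp pa sp]] := depth_walk a.
have := depth_min (p := rcons p b).
by rewrite rcons_path pp pa eab last_rcons size_rcons sp; apply.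
Qed.

Lemma depth_parent z : z != v -> exists2 y, e y z & depth y < depth z.
Proof.
have [p [pp <- <-]] := depth_walk z.
case/lastP: p pp => [|p y]; first by rewrite eqxx.
rewrite rcons_path last_rcons size_rcons => /andP [pp ey] _.
by exists (last v p) => //; rewrite ltnS depth_min.
Qed.

(* Every vertex on a shortest walk to x other than x itself is strictly closer to the root. *)
Lemma connect_avoid_root z x :
  x != z -> depth x <= depth z -> connect (avoid z) v x.
Proof.
move=> xz dxz; have [p [pp px sp]] := depth_walk x.
apply/connectP; exists p; last by rewrite px.
apply: avoid_path => //; apply/allP => y yp /=.
case: (eqVneq y x) => [-> // | yx].
case/lastP: p pp px sp yp => [|p x'] pp.
  by move=> /= vx _; rewrite vx inE (negbTE yx).
rewrite last_rcons => x'x; subst x; rewrite -rcons_cons mem_rcons in_cons (negbTE yx) /=.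
move: pp; rewrite rcons_path size_rcons => /andP [pp _] sp yp.
apply/eqP => yz; have := depth_on_path pp yp; rewrite yz; lia.
Qed.

Lemma depth_nbr_uniq a b z :
  e a z -> e b z -> depth a <= depth z -> depth b <= depth z -> a = b.
Proof.
move=> eaz ebz daz dbz.
have nz x : e x z -> x != z by move=> exz; apply: contraTneq exz => ->; rewrite e_irr.
apply: (acyclic_cut (z := z)); rewrite 1?[e z _]e_sym //.
apply: connect_trans (connect_avoid_root (nz _ ebz) dbz).
by rewrite (sym_connect_sym (avoid_sym z)) connect_avoid_root ?nz.
Qed.

Lemma depth_parent_uniq a b z :
  e a z -> e b z -> depth a < depth z -> depth b < depth z -> a = b.
Proof. by move=> eaz ebz /ltnW daz /ltnW dbz; exact: (depth_nbr_uniq eaz ebz). Qed.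

Lemma depth_adj a b : e a b -> depth b = (depth a).+1 \/ depth a = (depth b).+1.
Proof.
move=> eab; have eba : e b a by rewrite e_sym.
have := depth_edge eab; have := depth_edge eba.
case: (ltngtP (depth a) (depth b)) => [||dab _ _]; try lia.
exfalso; case: (eqVneq a v) => [av | /depth_parent [y eya dya]].
  have /depth_parent [y _] : b != v by rewrite -av; apply: contraTneq eba => ->; rewrite e_irr.
  by rewrite -dab av depth_root.
have yb := depth_nbr_uniq eya eba (ltnW dya) (eq_leq (esym dab)).
by move: dya; rewrite yb dab ltnn.
Qed.

End RootedTree.

Section Exchange.
Variables (T : finType) (e : rel T) (h : T -> nat).
Hypotheses (e_sym : symmetric e) (e_irr : irreflexive e).
Hypothesis h_adj : forall a b, e a b -> h b = (h a).+1 \/ h a = (h b).+1.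
Hypothesis h_parent_uniq :
  forall a b z, e a z -> e b z -> h a < h z -> h b < h z -> a = b.

Lemma adj_level_neq a b : e a b -> h a != h b.
Proof. by move=> /h_adj; lia. Qed.

Definition no_supported_child (M : {set T}) : Prop :=
  forall z p, z \in M :\: crit e M -> e p z -> h p < h z -> p \notin M.

Lemma child_of_supported M z x : no_supported_child M ->
  z \in M :\: crit e M -> e z x -> x \in M -> h x = (h z).+1.
Proof.
move=> invM zM ezx xM; case: (h_adj ezx) => // hzx.
by have := invM z x zM; rewrite e_sym xM hzx ltnSn => /(_ ezx isT).
Qed.

Section Step.
Variables (M A : {set T}) (k : nat).
Hypotheses (domM : dominating e M) (invM : no_supported_child M) (A_a1 : A \subset a1 e M).
Hypothesis levelA : forall x, x \in A -> h x = k.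
Hypothesis parentA : forall x y, x \in A -> e y x -> h y < h x -> y \in M.
Hypothesis A_nbr : forall x, x \in A -> exists2 w, e x w & w \in (M :\: A) :|: N1 e M.

Let A_mem x : x \in A -> x \in M.
Proof. by move=> /(subsetP A_a1) /a1_mem. Qed.

Lemma mem_exchange y :
  (y \in exchange e M A) = (y \in M) && (y \notin A) || (y \in private_nbrs e M A).
Proof. by rewrite /exchange in_setU in_setD andbC. Qed.

Lemma level_private_nbrs y : y \in private_nbrs e M A -> h y = k.+1.
Proof.
case/private_nbrsP => yN [x xA exy]; rewrite -(levelA xA).
case: (h_adj exy) => // hxy.
have yM : y \in M by apply: (parentA xA); [rewrite e_sym | rewrite hxy].
by have := N1_notin yN; rewrite yM.
Qed.

Lemma exchange_dominating : dominating e (exchange e M A).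
Proof.
apply/dominatingP => x; have /dominatingP/(_ x) [m xm mM] := domM.
have [mA | mA] := boolP (m \in A); last by exists m; rewrite // mem_exchange mM mA.
have [xM | xM] := boolP (x \in M).
  have [xA | xA] := boolP (x \in A); last first.
    by exists x; rewrite ?cnbhd_refl // mem_exchange xM xA.
  have [w exw] := A_nbr xA; rewrite in_setU => /orP [wMA | wN].
    by exists w; rewrite ?cnbhd_adj // /exchange in_setU wMA.
  exists w; rewrite ?cnbhd_adj // mem_exchange; apply/orP; right.
  by apply/private_nbrsP; split=> //; exists x.
have [w /andP [/andP [xw wM] wA] | allA] :=
  pickP [pred w | (w \in cnbhd e x) && (w \in M) && (w \notin A)].
  by exists w; rewrite // mem_exchange wM wA.
(* every vertex of M dominating x lies in A, hence is the parent of x *)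
have below w : w \in cnbhd e x -> w \in M -> h w < h x.
  move=> xw wM; have exw := cnbhd_out xw wM xM.
  have wA : w \in A by move: (allA w) => /=; rewrite xw wM /= => /negbFE.
  case: (h_adj exw) => [hxw | ->//]; have := xM.
  by rewrite (parentA wA) // ?hxw // e_sym.
have xN : x \in N1 e M.
  apply: (N1_intro xM xm mM) => w xw wM.
  apply: (h_parent_uniq (z := x)); rewrite 1?e_sym ?below //.
  - exact: cnbhd_out xw wM xM.
  - exact: cnbhd_out xm mM xM.
exists x; rewrite ?cnbhd_refl // mem_exchange; apply/orP; right.
apply/private_nbrsP; split=> //; exists m => //.
by rewrite e_sym; exact: cnbhd_out xm mM xM.
Qed.

Lemma private_nbrs_crit y :
  y \in private_nbrs e M A -> y \in crit e (exchange e M A).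
Proof.
move=> yN'; case/private_nbrsP: (yN') => yN [x xA exy].
rewrite inE mem_exchange yN' orbT /=; apply/dominatingP => /(_ y) [t yt].
rewrite in_setD1 mem_exchange => /andP [ty /orP [/andP [tM tA] | tN']].
  have xy : x \in cnbhd e y by rewrite cnbhd_adj // e_sym.
  by move: tA; rewrite (N1_uniq yN yt tM xy (A_mem xA)) xA.
have := adj_level_neq (cnbhd_neq yt ty).
by rewrite (level_private_nbrs yN') (level_private_nbrs tN') eqxx.
Qed.

Lemma exchange_parent_of_supported z p :
  z \in (M :\: crit e M) :\: A -> e p z -> h p < h z -> p \notin exchange e M A.
Proof.
rewrite in_setD => /andP [zA zMc] epz hpz; have /setDP [zM _] := zMc.
rewrite mem_exchange (negbTE (invM zMc epz hpz)) /=.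
apply/private_nbrsP => -[pN [x xA exp]].
have xp : x \in cnbhd e p by rewrite cnbhd_adj // e_sym.
by move: zA; rewrite (N1_uniq pN (cnbhd_adj epz) zM xp (A_mem xA)) xA.
Qed.

(* The private neighbour w of z in M is re-dominated by some t in N', adjacent to
   some x in A; this forces h x = k, h t = k + 1, h w = k + 2, h z = k + 3, so w
   is the parent of z. *)
Lemma exchange_parent_of_crit z p :
  z \in crit e M -> z \notin A -> z \in exchange e M A :\: crit e (exchange e M A) ->
  e p z -> h p < h z -> p \notin exchange e M A.
Proof.
move=> zc zA /supported_dominating /dominatingP dz epz hpz.
have zM := subsetP (crit_subset e M) z zc.
have [w zw Mw] := crit_private domM zc.
have [t wt] := dz w; rewrite in_setD1 mem_exchange.
case/andP => tz /orP [/andP [tM _] | tN']; first by move: tz; rewrite (Mw t wt tM) eqxx.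
case/private_nbrsP: (tN') => tN [x xA ext]; have ht := level_private_nbrs tN'.
have zt : z \notin cnbhd e t.
  have xt : x \in cnbhd e t by rewrite cnbhd_adj // e_sym.
  by apply: contra zA => tz'; rewrite (N1_uniq tN tz' zM xt (A_mem xA)).
have tw : t != w by apply: contraNneq zt => ->.
have zw' : z != w by apply: contraNneq zt => ->; rewrite (cnbhd_sym e_sym).
have ewt := cnbhd_neq wt tw; have ewz := cnbhd_neq zw zw'.
have wM : w \notin M by apply: contra zw' => wM; rewrite (Mw w (cnbhd_refl e w) wM).
have hw : h w = k.+2.
  case: (h_adj ewt) => [htw | ->]; last by rewrite ht.
  have wx : w = x by apply: (h_parent_uniq ewt ext); [rewrite htw | rewrite ht (levelA xA)].
  by move: wM; rewrite wx (A_mem xA).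
have hz : h z = k.+3.
  case: (h_adj ewz) => [-> | hwz]; first by rewrite hw.
  have ezw : e z w by rewrite e_sym.
  have etw : e t w by rewrite e_sym.
  have zt' : z = t by apply: (h_parent_uniq ezw etw); [rewrite hwz | rewrite hw ht].
  by move: (N1_notin tN); rewrite -zt' zM.
have -> : p = w by apply: h_parent_uniq epz (ewz : e w z) hpz _; rewrite hz hw.
rewrite mem_exchange (negbTE wM) /=.
by apply/negP => /level_private_nbrs; rewrite hw => /eqP; rewrite eqSS eqn_leq ltnn.
Qed.

Lemma exchange_no_supported_child : no_supported_child (exchange e M A).
Proof.
move=> z p zM' epz hpz; have /setDP [zin zc'] := zM'.
move: zin; rewrite mem_exchange => /orP [/andP [zM zA] | zN']; last first.
  by move: zc'; rewrite private_nbrs_crit.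
have [zc | zc] := boolP (z \in crit e M).
  exact: (exchange_parent_of_crit zc zA zM' epz hpz).
by apply: exchange_parent_of_supported epz hpz; rewrite !in_setD zA zc zM.
Qed.

Lemma card_le_private_nbrs : #|A| <= #|private_nbrs e M A|.
Proof.
have A_img : A \subset dominator e M @: private_nbrs e M A.
  apply/subsetP => x xA.
  have /(subsetP A_a1)/a1_N1 [y] := xA; rewrite (cnbhd_sym e_sym) => yx yN.
  have eyx := cnbhd_out yx (A_mem xA) (N1_notin yN).
  apply/imsetP; exists y; last by rewrite (dominatorE yN yx (A_mem xA)).
  by apply/private_nbrsP; split=> //; exists x; rewrite // e_sym.
exact: leq_trans (subset_leq_card A_img) (leq_imset_card _ _).
Qed.

Lemma sum_exchange (F : T -> nat) :
  \sum_(x in exchange e M A) F x + \sum_(x in A) F x =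
  \sum_(x in M) F x + \sum_(x in private_nbrs e M A) F x.
Proof.
have AM : M :&: A = A by apply/setIidPr/subsetP => x /A_mem.
have N'M : private_nbrs e M A :\: (M :\: A) = private_nbrs e M A.
  apply/setDidPl; rewrite disjoint_subset; apply/subsetP => y /private_nbrsP [/N1_notin yM _].
  by rewrite !inE (negbTE yM) andbF.
rewrite (big_setID (A := exchange e M A) (M :\: A)) (big_setID (A := M) A) /= AM.
rewrite /exchange setUK setDUl setDv set0U N'M.
by rewrite addnAC [in RHS](addnC (\sum_(i in A) F i)).
Qed.

Lemma exchange_card : #|M| <= #|exchange e M A|.
Proof.
have := sum_exchange (fun=> 1); rewrite !sum1_card.
by have := card_le_private_nbrs; lia.
Qed.

Lemma exchange_level_sum :
  \sum_(x in M) h x + #|A| <= \sum_(x in exchange e M A) h x.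
Proof.
have := sum_exchange h.
rewrite (eq_bigr (fun=> k) levelA) (eq_bigr (fun=> k.+1) level_private_nbrs) !sum_nat_const.
have := leq_mul card_le_private_nbrs (leqnn k.+1); rewrite !mulnS.
lia.
Qed.

Lemma exchange_invariant :
  [/\ dominating e (exchange e M A), no_supported_child (exchange e M A),
      #|M| <= #|exchange e M A| &
      \sum_(x in M) h x + #|A| <= \sum_(x in exchange e M A) h x].
Proof.
split; [exact: exchange_dominating | exact: exchange_no_supported_child |
        exact: exchange_card | exact: exchange_level_sum].
Qed.

End Step.

Lemma alg_step_progress r M M' :
  dominating e M -> no_supported_child M -> alg_step e r M M' ->
  [/\ dominating e M', no_supported_child M', #|M| <= #|M'| &
      \sum_(x in M) h x < \sum_(x in M') h x].
Proof.
move=> domM invM [_ [u [uMc _ ->]]]; have /setDP [uM uc] := uMc.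
set A := [set x in a1 e M | e u x].
have A_a1 : A \subset a1 e M by apply/subsetP => x; rewrite inE => /andP [].
have levelA x : x \in A -> h x = (h u).+1.
  by rewrite inE => /andP [/a1_mem xM eux]; exact: child_of_supported invM uMc eux xM.
have parentA x y : x \in A -> e y x -> h y < h x -> y \in M.
  move=> xA eyx hyx; move: (xA); rewrite inE => /andP [_ eux].
  have -> : y = u by apply: (h_parent_uniq eyx eux hyx); rewrite (levelA x xA).
  exact: uM.
have uA : u \notin A.
  by rewrite inE; apply: contra uc => /andP [/(subsetP (a1_subset e M))].
have A_nbr x : x \in A -> exists2 w, e x w & w \in (M :\: A) :|: N1 e M.
  move=> xA; move: (xA); rewrite inE => /andP [_ eux].
  by exists u; rewrite 1?e_sym // in_setU in_setD uA uM.
(* a vertex dominating u besides u itself is a child of u lying in A *)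
have A_gt0 : 0 < #|A|.
  have /dominatingP/(_ u) [w uw] := supported_dominating uMc.
  rewrite in_setD1 => /andP [wu wM]; have euw := cnbhd_neq uw wu.
  have hw := child_of_supported invM uMc euw wM.
  have wc : w \in crit e M.
    apply: contraT => wc; have wMc : w \in M :\: crit e M by rewrite in_setD wc.
    by have := invM w u wMc euw; rewrite hw ltnSn uM => /(_ isT).
  have ewu : e w u by rewrite e_sym.
  have wa : w \in a1 e M := crit_a1 e_sym e_irr domM wc uM ewu.
  by apply/card_gt0P; exists w; rewrite inE wa euw.
have [domM' invM' cardM' sumM'] := exchange_invariant domM invM A_a1 levelA parentA A_nbr.
by split=> //; apply: leq_trans sumM'; rewrite -addn1 leq_add2l.
Qed.

Lemma init_exchange M v : minimal_dominating e M -> v \in a1 e M -> h v = 0 ->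
  let M0 := (M :\ v) :|: (cnbhd e v :&: N1 e M) in
  [/\ dominating e M0, no_supported_child M0 & #|M| <= #|M0|].
Proof.
move=> minM va hv M0; have domM : dominating e M by case/andP: minM.
have invM : no_supported_child M.
  by move=> z p /setDP [zM]; rewrite (minimal_crit minM zM).
have vN : v \notin N1 e M by apply: contraL (a1_mem va) => /N1_notin.
have A_a1 : [set v] \subset a1 e M by rewrite sub1set.
have levelA x : x \in [set v] -> h x = 0 by move=> /set1P ->.
have parentA x y : x \in [set v] -> e y x -> h y < h x -> y \in M.
  by move=> /set1P ->; rewrite hv.
have A_nbr x : x \in [set v] -> exists2 w, e x w & w \in (M :\: [set v]) :|: N1 e M.
  move=> /set1P ->; have [y vy yN] := a1_N1 va.
  by exists y; [exact: cnbhd_out vy yN vN | rewrite in_setU yN orbT].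
have -> : M0 = exchange e M [set v].
  congr (_ :|: _); apply/setP => y; rewrite in_setI; apply/andP/private_nbrsP.
    by case=> vy yN; split=> //; exists v; [exact: set11 | exact: cnbhd_out vy yN vN].
  by case=> yN [x /set1P -> evy]; rewrite cnbhd_adj.
by have [] := exchange_invariant domM invM A_a1 levelA parentA A_nbr.
Qed.

Lemma alg_run_invariant r (f : nat -> {set T}) n :
  dominating e (f 0) -> no_supported_child (f 0) ->
  (forall i, i < n -> alg_step e r (f i) (f i.+1)) ->
  [/\ dominating e (f n), no_supported_child (f n), #|f 0| <= #|f n| &
      n <= \sum_(x in f n) h x].
Proof.
move=> dom0 inv0; elim: n => [|n IH] steps; first by [].
have [domn invn cardn sumn] := IH (fun i lt_in => steps i (ltnW lt_in)).
have [domn' invn' cardn' sumn'] := alg_step_progress domn invn (steps n (ltnSn n)).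
by split=> //; [exact: leq_trans cardn cardn' | exact: leq_ltn_trans sumn sumn'].
Qed.

Lemma alg_run_correct M v : minimal_dominating e M -> v \in a1 e M -> h v = 0 ->
  let M0 := (M :\ v) :|: (cnbhd e v :&: N1 e M) in
  [/\ (forall M', alg_reach e v M0 M' -> dominating e M'),
      ~ alg_diverges e v M0,
      (forall M', alg_reach e v M0 M' -> #|M0| <= #|M'|)
    & #|M| <= #|M0|].
Proof.
move=> minM va hv M0; have [dom0 inv0 card0] := init_exchange minM va hv.
have run f n : f 0 = M0 -> (forall i, i < n -> alg_step e v (f i) (f i.+1)) ->
    [/\ dominating e (f n), no_supported_child (f n), #|M0| <= #|f n| &
        n <= \sum_(x in f n) h x].
  by move=> f0; rewrite -f0; apply: alg_run_invariant; rewrite f0.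
split=> // [M' [f [n [f0 <- /(run f n f0) []]]] // | [f [f0 steps]] |
             M' [f [n [f0 <- /(run f n f0) []]]] //].
set m := (\sum_x h x).+1; have [_ _ _ m_le] := run f m f0 (fun i _ => steps i).
have : \sum_(x in f m) h x <= \sum_x h x by rewrite [leqRHS](bigID (mem (f m))) leq_addr.
by move=> /(leq_trans m_le); rewrite ltnn.
Qed.

End Exchange.


Theorem theorem4p5 (T : finType) (e : rel T) (M : {set T}) (v : T) :
  is_tree e ->
  minimal_dominating e M ->
  v \in a1 e M ->
  let M0 := (M :\ v) :|: (cnbhd e v :&: N1 e M) in
  [/\ (* the algorithm never gets stuck: every iterate is dominating,
         so a non-minimal one has a supported vertex *)
      (forall M', alg_reach e v M0 M' -> dominating e M'),
      (* the algorithm terminates, whatever choices are made *)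
      ~ alg_diverges e v M0,
      (* every output is a minimal dominating set of size >= |M0| *)
      (forall M', alg_reach e v M0 M' -> minimal_dominating e M' -> #|M0| <= #|M'|)
    & #|M| <= #|M0|].
Proof.
move=> [[e_sym e_irr] [conn acyc]] minM va M0.
have [dom_run no_div card_run card0] :=
  alg_run_correct e_sym e_irr (depth_adj v e_sym e_irr conn acyc)
    (depth_parent_uniq (conn := conn) e_sym e_irr acyc) minM va (depth_root v conn).
by split=> // M' /card_run.
Qed.
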